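(* Let $R$ be a ring. The assignment $$\gamma_{0,R}([M]) \;=\; \sum_{b\in M} s(b)\,[P_b]\in K_0(R)$$ gives a well-defined homomorphism $\gamma_{0,R}:\mathsf{Cob}_0(R)\to K_0(R)$, and $\gamma_{0,R}$ is an isomorphism of abelian groups.
   Context: $K_0(R)$ is the Grothendieck group of finitely generated projective left $R$-modules: generators $[P]$, relations $[P_2]=[P_1]+[P_3]$ whenever $P_2\cong P_1\oplus P_3$. An $R$-decorated 0-foam $M$ is a finite set of points $b$, each carrying a sign $s(b)\in\{+1,-1\}$ and a finitely generated projective left $R$-module $P_b$. We write $-M$ for $M$ with all signs reversed and $\sqcup$ for disjoint union. An $R$-decorated 1-foam $U$ is the topological realization of a finite oriented graph. Multiple edges, loops and vertexless circle components are allowed. Its interior vertices are trivalent, and each interior vertex is of one of two types: - an ''in'' vertex, with two edges oriented into it and one out of it; - an ''out'' vertex, with one edge in and two out. At each vertex the two edges of the same orientation type are called thin and the remaining one thick. $U$ may also have univalent boundary vertices. $U$ carries a flat bundle of finitely generated projective left $R$-modules over the complement of its trivalent vertices, so that parallel transport along edges gives isomorphisms between fibers and each circle has a monodromy automorphism. At each trivalent vertex an isomorphism $P_{\mathrm{thick}}\cong P_{\mathrm{thin},1}\oplus P_{\mathrm{thin},2}$ is fixed between the fibers at points near the vertex on the thick edge and the two thin edges. The boundary $\partial U$ is the $R$-decorated 0-foam of univalent vertices $b$. Such a $b$ has the fiber $P_b$ there, with sign $+1$ if the edge at $b$ is oriented towards $b$ and $-1$ otherwise. $U$ is a cobordism from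 $M_0$ to $M_1$ if $\partial U\cong M_1\sqcup(-M_0)$ (preserving decorations). $\mathsf{Cob}_0(R)$ is the set of $R$-decorated 0-foams modulo the equivalence relation generated by cobordism. It is an abelian group under disjoint union, with $0$ the empty foam and inverse $[M]\mapsto[-M]$. *)

From HB Require Import structures.
From mathcomp Require Import all_boot all_order all_algebra.
From Stdlib Require Import Relation_Operators Permutation.
Set Implicit Arguments. Unset Strict Implicit. Unset Printing Implicit Defensive.
Import GRing.Theory.
Local Open Scope ring_scope.

Section Foams.
Variable R : pzRingType.

Definition fin_gen (P : lmodType R) : Prop :=
  exists s : seq P, forall x : P,
    exists c : 'I_(size s) -> R, x = \sum_(i < size s) c i *: tnth (in_tuple s) i.

Definition projective (P : lmodType R) : Prop :=
  forall (M N : lmodType R) (g : {linear M -> N}) (f : {linear P -> N}),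
    (forall y : N, exists x : M, g x = y) ->
    exists h : {linear P -> M}, forall x : P, g (h x) = f x.

Record FGP := { fgp_mod :> lmodType R; fgp_fg : fin_gen fgp_mod;
                fgp_proj : projective fgp_mod }.

Definition mod_iso (P Q : lmodType R) : Prop :=
  exists f : {linear P -> Q}, bijective f.

Definition iso_sum (P2 P1 P3 : lmodType R) : Prop :=
  mod_iso P2 (P1 * P3)%type.

(* An element of the free abelian group on the generators [P] is represented by a
   finite formal sum  sum_k n_k [P_k]  (list of pairs (n_k, P_k)).  K0_eq is the
   equality of K_0(R): the congruence generated by the laws of the free abelian
   group on isomorphism classes and the relations [P2] = [P1] + [P3]. *)
Definition K0sum := seq (int * FGP).

Inductive K0_step : K0sum -> K0sum -> Prop :=
| K0_perm s t : Permutation s t -> K0_step s t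
| K0_zero (P : FGP) s : K0_step ((0%R, P) :: s) s
| K0_add n m (P : FGP) s : K0_step ((n, P) :: (m, P) :: s) ((n + m, P) :: s)
| K0_iso n (P Q : FGP) s : mod_iso P Q -> K0_step ((n, P) :: s) ((n, Q) :: s)
| K0_rel n (P1 P2 P3 : FGP) s : iso_sum P2 P1 P3 ->
    K0_step ((n, P2) :: s) ((n, P1) :: (n, P3) :: s).

Definition K0_eq : K0sum -> K0sum -> Prop := clos_refl_sym_trans K0sum K0_step.

(* a point b with sign s(b) (true = +1, false = -1) and module P_b *)
Record point := Point { psign : bool; pmod : FGP }.
Definition foam0 := seq point.

Definition neg_foam (M : foam0) : foam0 :=
  map (fun b => Point (~~ psign b) (pmod b)) M.
(* disjoint union is concatenation ++ *)

Inductive vkind := VIn | VOut | VBdry.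

(* The flat bundle over the complement of the trivalent vertices is trivial over
   each edge, so it is given by one fiber efib e per edge (parallel transport
   identifies the fibers along the edge). Vertexless circle components carry a
   fiber and a monodromy automorphism. *)
Record foam1 := {
  fE : finType; fV : finType;
  esrc : fE -> fV; etgt : fE -> fV;
  vk : fV -> vkind;
  efib : fE -> FGP;
  circles : seq {P : FGP & {f : {linear P -> P} | bijective f}};
  f_in_val : forall v, vk v = VIn ->
     #|[pred e | etgt e == v]| = 2%N /\ #|[pred e | esrc e == v]| = 1%N;
  f_out_val : forall v, vk v = VOut ->
     #|[pred e | etgt e == v]| = 1%N /\ #|[pred e | esrc e == v]| = 2%N;
  f_bdry_val : forall v, vk v = VBdry ->
     (#|[pred e | etgt e == v]| + #|[pred e | esrc e == v]|)%N = 1%N;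
  f_in_iso : forall v, vk v = VIn -> forall e1 e2 e, e1 != e2 ->
     etgt e1 = v -> etgt e2 = v -> esrc e = v -> iso_sum (efib e) (efib e1) (efib e2);
  f_out_iso : forall v, vk v = VOut -> forall e1 e2 e, e1 != e2 ->
     esrc e1 = v -> esrc e2 = v -> etgt e = v -> iso_sum (efib e) (efib e1) (efib e2)
}.

(* "boundary of U is isomorphic to M (preserving decorations)":
   a bijection between the points of M and the univalent vertices of U such that
   the sign of a point is +1 iff the edge at the vertex is oriented towards it, and
   the decorating module is isomorphic to the fiber there. *)
Definition bdry_iso (U : foam1) (M : foam0) : Prop :=
  exists f : nat -> fV U,
    (forall i j, (i < length M)%coq_nat -> (j < length M)%coq_nat -> f i = f j -> i = j) /\
    (forall v, vk v = VBdry -> exists i, (i < length M)%coq_nat /\ f i = v) /\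
    (forall i b, List.nth_error M i = Some b ->
       vk (f i) = VBdry /\
       forall e : fE U,
         (etgt e = f i -> psign b = true /\ mod_iso (efib e) (pmod b)) /\
         (esrc e = f i -> psign b = false /\ mod_iso (efib e) (pmod b))).

Definition cobordism (U : foam1) (M0 M1 : foam0) : Prop :=
  bdry_iso U (M1 ++ neg_foam M0).

Definition cobordant (M0 M1 : foam0) : Prop := exists U : foam1, cobordism U M0 M1.

Definition Cob0_eq : foam0 -> foam0 -> Prop := clos_refl_sym_trans foam0 cobordant.

Definition gamma0 (M : foam0) : K0sum :=
  map (fun b => ((if psign b then 1 else -1)%R, pmod b)) M.

End Foams.

From HB Require Import structures.
From mathcomp Require Import all_boot all_order all_algebra.
From Stdlib Require Import Relation_Operators Permutation.
From mathcomp Require Import zify.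
Set Implicit Arguments. Unset Strict Implicit. Unset Printing Implicit Defensive.
Import GRing.Theory.

(* The boundary of a 1-foam is 0 in K_0(R): summing over all vertices the
   incoming fibers minus the outgoing ones counts each edge once with each sign;
   a trivalent vertex contributes 0 by [P_thick] = [P_thin1] + [P_thin2], and a
   univalent one contributes its boundary point.  Hence gamma_0 is well defined.
   Every formal sum is gamma_0 of the foam listing each [P] with its
   multiplicity, and each defining relation of K_0(R) is realised by a
   cobordism (an edge for an isomorphism or for [P] - [P] = 0, a tripod for a
   splitting), while disjoint union with cylinders makes cobordism a
   congruence; so this expansion inverts gamma_0. *)

Lemma size_length (T : Type) (s : seq T) : length s = size s.
Proof. by elim: s => //= x s ->. Qed.

(* [K0sum] and [foam0] have no decidable equality, so they are permuted with
   Stdlib's [Permutation]; lists of edges and vertices use [perm_eq]. *)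
Lemma Permutation_of_perm_eq (T : eqType) (s t : seq T) :
  perm_eq s t -> Permutation s t.
Proof.
elim: s t => [|x s IH] t pst; first by case: t pst => // ? ? /perm_size.
have xt : x \in t by rewrite -(perm_mem pst) mem_head.
case/splitPr: xt pst => t1 t2 pst; apply: Permutation_cons_app; apply: IH.
rewrite -(perm_cons x); apply: seq.perm_trans pst _.
by rewrite -cat1s perm_catCA.
Qed.

Lemma perm_eq_of_Permutation (T : eqType) (s t : seq T) :
  Permutation s t -> perm_eq s t.
Proof.
elim=> {s t} // [x s t _|x y s|s t u _ pst _ ptu]; first by rewrite perm_cons.
- by apply/permP => a /=; rewrite addnCA.
- exact: seq.perm_trans pst ptu.
Qed.

Lemma Permutation_flatten (T : Type) (ss ss' : seq (seq T)) :
  Permutation ss ss' -> Permutation (flatten ss) (flatten ss').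
Proof.
elim=> {ss ss'} //= [s ss ss' _|s s' ss|ss ss' ss'' _ H1 _ H2].
- exact: Permutation_app_head.
- exact: Permutation_app_swap_app.
- exact: Permutation_trans H1 H2.
Qed.

Lemma Permutation_flatten_map_cat (S T : Type) (F G : S -> seq T) (s : seq S) :
  Permutation (flatten [seq F x ++ G x | x <- s])
              (flatten (map F s) ++ flatten (map G s)).
Proof.
elim: s => //= x s IH; rewrite -!catA; apply: Permutation_app_head.
apply: Permutation_trans (Permutation_app_head _ IH) _.
exact: Permutation_app_swap_app.
Qed.

Lemma flatten_map_map (S T V : Type) (f : T -> V) (g : S -> seq T) (s : seq S) :
  flatten [seq map f (g x) | x <- s] = map f (flatten (map g s)).
Proof. by rewrite map_flatten -map_comp. Qed.

Lemma perm_flatten_fibers (S : eqType) (T : finType) (f : S -> T) (s : seq S) :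
  perm_eq (flatten [seq [seq x <- s | f x == v] | v <- enum T]) s.
Proof.
have fibers_cons x s' (vs : seq T) : uniq vs ->
    perm_eq (flatten [seq [seq y <- x :: s' | f y == v] | v <- vs])
      (nseq (f x \in vs) x ++ flatten [seq [seq y <- s' | f y == v] | v <- vs]).
  elim: vs => //= v vs IH /andP[vNvs /IH{}IH]; rewrite in_cons.
  have [fxv|fxNv] /= := eqVneq (f x) v.
    by move: IH; rewrite fxv (negPf vNvs) perm_cons perm_cat2l.
  by rewrite perm_sym perm_catCA perm_cat2l perm_sym.
elim: s => [|x s IH] /=; first by elim: (enum T).
by rewrite (seq.perm_trans (fibers_cons _ _ _ (enum_uniq T))) // mem_enum perm_cons.
Qed.

Lemma card_pred_filter (T : finType) (p : pred T) :
  #|[pred x | p x]| = size (filter p (enum T)).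
Proof. by rewrite cardE enumT. Qed.

Lemma Forall2_map_iota (A B : Type) (P : A -> B -> Prop) (f : nat -> B) (l : seq A) k :
  (forall i a, List.nth_error l i = Some a -> P a (f (k + i)%N)) ->
  List.Forall2 P l (map f (iota k (size l))).
Proof.
elim: l k => [|a l IH] k Pl /=; constructor; first by have := Pl 0%N a erefl; rewrite addn0.
by apply: IH => i a' la'; rewrite addSnnS; apply: Pl i.+1 a' la'.
Qed.

Lemma Forall2_nth_error (A B : Type) (P : A -> B -> Prop) (b0 : B) l1 l2 :
  List.Forall2 P l1 l2 ->
  forall i a, List.nth_error l1 i = Some a -> P a (nth b0 l2 i).
Proof.
elim=> {l1 l2} [|a b l1 l2 Pab _ IH] [|i] a' //=; first by case=> <-.
exact: IH.
Qed.

Lemma Forall2_mem_r (A : Type) (B : eqType) (P : A -> B -> Prop) l1 l2 b :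
  List.Forall2 P l1 l2 -> b \in l2 -> exists a, P a b.
Proof.
elim=> {l1 l2} // a b' l1 l2 Pab' _ IH; rewrite in_cons => /orP[/eqP->|/IH//].
by exists a.
Qed.

Lemma Forall2_map_r (A B C : Type) (P : A -> B -> Prop) (Q : A -> C -> Prop) (f : B -> C)
    l1 l2 :
  (forall a b, P a b -> Q a (f b)) -> List.Forall2 P l1 l2 -> List.Forall2 Q l1 (map f l2).
Proof. by move=> PQ; elim=> //= a b l1' l2' Pab _ IH; constructor; auto. Qed.

Section K0Calculus.
Variable R : pzRingType.
Local Open Scope ring_scope.
Local Notation K0 := (@K0_eq R).

Lemma K0_refl (s : K0sum R) : K0 s s. Proof. exact: rst_refl. Qed.
Lemma K0_sym (s t : K0sum R) : K0 s t -> K0 t s. Proof. exact: rst_sym. Qed.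
Lemma K0_trans (s t u : K0sum R) : K0 s t -> K0 t u -> K0 s u.
Proof. exact: rst_trans. Qed.
Lemma K0_of_step (s t : K0sum R) : K0_step s t -> K0 s t. Proof. exact: rst_step. Qed.

Lemma K0_of_Permutation (s t : K0sum R) : Permutation s t -> K0 s t.
Proof. by move=> pst; apply/K0_of_step/K0_perm. Qed.

Lemma K0_catr (s t u : K0sum R) : K0 s t -> K0 (s ++ u) (t ++ u).
Proof.
elim=> {s t} [s t|s|s t _|s t w _ st _ tw]; last 3 first.
- exact: K0_refl.
- exact: K0_sym.
- exact: K0_trans st tw.
case=> {s t} [s t pst|P s|n m P s|n P Q s PQ|n P1 P2 P3 s P2P13]; apply: K0_of_step.
- exact/K0_perm/Permutation_app_tail.
- exact: K0_zero.
- exact: K0_add.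
- exact: K0_iso.
- exact: K0_rel.
Qed.

Lemma K0_catl (s t u : K0sum R) : K0 s t -> K0 (u ++ s) (u ++ t).
Proof.
move=> st; apply: K0_trans (K0_of_Permutation (Permutation_app_comm _ _)) _.
apply: K0_trans (K0_catr u st) _.
exact: K0_of_Permutation (Permutation_app_comm _ _).
Qed.

Lemma K0_cat_cons x (s t : K0sum R) : K0 (s ++ x :: t) (x :: s ++ t).
Proof. exact/K0_of_Permutation/Permutation_sym/Permutation_middle. Qed.

Lemma K0_cat (s s' t t' : K0sum R) : K0 s s' -> K0 t t' -> K0 (s ++ t) (s' ++ t').
Proof. by move=> ss' tt'; apply: K0_trans (K0_catr _ ss') (K0_catl _ tt'). Qed.

Lemma K0_cons x (s t : K0sum R) : K0 s t -> K0 (x :: s) (x :: t).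
Proof. exact: (K0_catl [:: x]). Qed.

Lemma K0_flatten_filter (T : Type) (F : T -> K0sum R) (p : pred T) (vs : seq T) :
  (forall v, ~~ p v -> K0 (F v) [::]) ->
  K0 (flatten (map F vs)) (flatten (map F (filter p vs))).
Proof.
move=> F0; elim: vs => [|v vs IH] /=; first exact: K0_refl.
case: ifP => [_|/negbT/F0 Fv0]; first exact: K0_catl.
exact: K0_cat Fv0 IH.
Qed.

Lemma K0_cancel (n m : int) (P : FGP R) (s : K0sum R) :
  n + m = 0 -> K0 ((n, P) :: (m, P) :: s) s.
Proof.
move=> nm0; apply: K0_trans (K0_of_step (K0_add _ _ _ _)) _.
by rewrite nm0; apply/K0_of_step/K0_zero.
Qed.

Lemma K0_pos_neg (T : Type) (g : T -> FGP R) (l : seq T) :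
  K0 ([seq (1, g x) | x <- l] ++ [seq (-1, g x) | x <- l]) [::].
Proof.
elim: l => [|x l IH] /=; first exact: K0_refl.
apply: K0_trans (K0_cons _ (K0_cat_cons _ _ _)) _.
exact: K0_trans (K0_cancel _ _ (addrN 1)) IH.
Qed.

Lemma gamma0_cat (M N : foam0 R) : gamma0 (M ++ N) = gamma0 M ++ gamma0 N.
Proof. exact: map_cat. Qed.

Lemma K0_gamma0_neg_cat (M : foam0 R) : K0 (gamma0 (neg_foam M) ++ gamma0 M) [::].
Proof.
elim: M => [|[[] P] M IH] /=; first exact: K0_refl.
all: apply: K0_trans (K0_cons _ (K0_cat_cons _ _ _)) _.
- exact: K0_trans (K0_cancel _ _ (addNr 1)) IH.
- exact: K0_trans (K0_cancel _ _ (addrN 1)) IH.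
Qed.

Lemma K0_gamma0_of_null (M0 M1 : foam0 R) :
  K0 (gamma0 (M1 ++ neg_foam M0)) [::] -> K0 (gamma0 M0) (gamma0 M1).
Proof.
rewrite gamma0_cat => null; apply: K0_sym.
have split_M0 : K0 (gamma0 M1) (gamma0 M1 ++ gamma0 (neg_foam M0) ++ gamma0 M0).
  by rewrite -[X in K0 X _]cats0; apply/K0_catl/K0_sym/K0_gamma0_neg_cat.
by apply: K0_trans split_M0 _; rewrite catA; apply: (K0_catr _ null).
Qed.

(* [Negz k] stands for [-(k+1)], hence [k.+1] negative points. *)
Definition copies (n : int) (P : FGP R) : foam0 R :=
  match n with Posz k => nseq k (Point true P) | Negz k => nseq k.+1 (Point false P) end.

Definition expand (s : K0sum R) : foam0 R := flatten [seq copies x.1 x.2 | x <- s].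

Lemma gamma0K : cancel (@gamma0 R) expand.
Proof. by elim=> [|[[] P] M IH] //=; rewrite /expand /= in IH *; rewrite IH. Qed.

Lemma K0_gamma0_copies (n : int) (P : FGP R) : K0 (gamma0 (copies n P)) [:: (n, P)].
Proof.
case: n => k /=; elim: k => [|k IH] /=.
- exact: K0_sym (K0_of_step (K0_zero _ _)).
- apply: K0_trans (K0_cons _ IH) (K0_trans (K0_of_step (K0_add _ _ _ _)) _).
  have -> : 1 + Posz k = Posz k.+1 by lia.
  exact: K0_refl.
- exact: K0_refl.
- apply: K0_trans (K0_cons _ IH) (K0_trans (K0_of_step (K0_add _ _ _ _)) _).
  have -> : -1 + Negz k = Negz k.+1 by lia.
  exact: K0_refl.
Qed.

Lemma K0_gamma0_expand (s : K0sum R) : K0 (gamma0 (expand s)) s.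
Proof.
elim: s => [|[n P] s IH] /=; first exact: K0_refl.
by rewrite /expand /= gamma0_cat; apply: K0_cat (K0_gamma0_copies n P) IH.
Qed.

Lemma K0_split_in (P1 P2 P : FGP R) : iso_sum P P1 P2 ->
  K0 [:: (1, P1); (1, P2); (-1, P)] [::].
Proof.
move=> P12; apply: K0_trans (K0_of_Permutation
  (Permutation_sym (Permutation_cons_append [:: (1, P1); (1, P2)] _))) _.
apply: K0_trans (K0_of_step (K0_rel _ _ P12)) _.
apply: K0_trans (K0_cons _ (K0_of_Permutation (perm_swap _ _ _))) _.
exact: K0_trans (K0_cancel _ _ (addNr 1)) (K0_cancel _ _ (addNr 1)).
Qed.

Lemma K0_split_out (P1 P2 P : FGP R) : iso_sum P P1 P2 ->
  K0 [:: (1, P); (-1, P1); (-1, P2)] [::].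
Proof.
move=> P12; apply: K0_trans (K0_of_step (K0_rel _ _ P12)) _.
apply: K0_trans (K0_cons _ (K0_of_Permutation (perm_swap _ _ _))) _.
exact: K0_trans (K0_cancel _ _ (addrN 1)) (K0_cancel _ _ (addrN 1)).
Qed.

End K0Calculus.

Section FoamBoundary.
Variable R : pzRingType.
Local Open Scope ring_scope.
Local Notation K0 := (@K0_eq R).

Definition bdry_point (U : foam1 R) (b : point R) (v : fV U) : Prop :=
  vk v = VBdry /\ forall e : fE U,
    (etgt e = v -> psign b = true /\ mod_iso (efib e) (pmod b)) /\
    (esrc e = v -> psign b = false /\ mod_iso (efib e) (pmod b)).

(* [bdry_iso] with the matching of boundary points given by a duplicate-free list. *)
Definition bdry_seq (U : foam1 R) (M : foam0 R) : Prop :=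
  exists vs : seq (fV U), [/\ uniq vs, forall v, vk v = VBdry -> v \in vs
                            & List.Forall2 (@bdry_point U) M vs].

Lemma bdry_seq_of_iso (U : foam1 R) (M : foam0 R) : bdry_iso U M -> bdry_seq U M.
Proof.
case=> f [f_inj [f_onto f_bdry]]; exists (map f (iota 0 (size M))); split.
- rewrite map_inj_in_uniq ?iota_uniq // => i j; rewrite !mem_iota /= => lt_i lt_j.
  by apply: f_inj; rewrite size_length; apply/ltP.
- move=> v /f_onto[i [lt_i <-]]; apply: map_f.
  by rewrite mem_iota add0n -size_length; apply/ltP.
- by apply: Forall2_map_iota => i b Mi; rewrite add0n; case: (f_bdry i b Mi).
Qed.

Lemma bdry_iso_of_seq (U : foam1 R) (M : foam0 R) (v0 : fV U) :
  bdry_seq U M -> bdry_iso U M.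
Proof.
case=> vs [uniq_vs vs_bdry M_vs].
have size_vs : size vs = size M.
  by have := List.Forall2_length M_vs; rewrite !size_length.
exists (nth v0 vs); split; [|split].
- move=> i j /ltP lt_i /ltP lt_j eq_ij; apply/eqP.
  by rewrite -(nth_uniq v0 _ _ uniq_vs) ?eq_ij // size_vs -size_length.
- move=> v /vs_bdry vs_v; exists (index v vs); split; last exact: nth_index.
  by apply/ltP; rewrite size_length -size_vs index_mem.
- by move=> i b Mi; case: (Forall2_nth_error v0 M_vs Mi).
Qed.

Section VertexTerms.
Variable U : foam1 R.

Definition incoming (v : fV U) : seq (fE U) := [seq e <- enum (fE U) | etgt e == v].
Definition outgoing (v : fV U) : seq (fE U) := [seq e <- enum (fE U) | esrc e == v].

Definition vertex_term (v : fV U) : K0sum R :=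
  [seq (1, efib e) | e <- incoming v] ++ [seq (-1, efib e) | e <- outgoing v].

Lemma card_incoming v : #|[pred e | etgt e == v]| = size (incoming v).
Proof. exact: card_pred_filter. Qed.

Lemma card_outgoing v : #|[pred e | esrc e == v]| = size (outgoing v).
Proof. exact: card_pred_filter. Qed.

Lemma mem_incoming v : {in incoming v, forall e, etgt e = v}.
Proof. by move=> e; rewrite mem_filter => /andP[/eqP]. Qed.

Lemma mem_outgoing v : {in outgoing v, forall e, esrc e = v}.
Proof. by move=> e; rewrite mem_filter => /andP[/eqP]. Qed.

Lemma uniq_incoming v : uniq (incoming v).
Proof. exact/filter_uniq/enum_uniq. Qed.

Lemma uniq_outgoing v : uniq (outgoing v).
Proof. exact/filter_uniq/enum_uniq. Qed.

Lemma K0_vertex_term_in v : vk v = VIn -> K0 (vertex_term v) [::].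
Proof.
move=> vIn; have [] := f_in_val vIn; rewrite card_incoming card_outgoing /vertex_term.
move: (uniq_incoming v) (@mem_incoming v) (@mem_outgoing v).
case: (incoming v) => [|e1 [|e2 []]] //; case: (outgoing v) => [|e []] //=.
rewrite inE andbT => e12 in_v out_v _ _; apply/K0_split_in/(f_in_iso vIn e12).
- by apply: in_v; rewrite mem_head.
- by apply: in_v; rewrite !inE eqxx orbT.
- by apply: out_v; rewrite mem_head.
Qed.

Lemma K0_vertex_term_out v : vk v = VOut -> K0 (vertex_term v) [::].
Proof.
move=> vOut; have [] := f_out_val vOut; rewrite card_incoming card_outgoing /vertex_term.
move: (uniq_outgoing v) (@mem_outgoing v) (@mem_incoming v).
case: (outgoing v) => [|e1 [|e2 []]] //; case: (incoming v) => [|e []] //=.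
rewrite inE andbT => e12 out_v in_v _ _; apply/K0_split_out/(f_out_iso vOut e12).
- by apply: out_v; rewrite mem_head.
- by apply: out_v; rewrite !inE eqxx orbT.
- by apply: in_v; rewrite mem_head.
Qed.

Lemma K0_vertex_term_bdry v b : bdry_point b v -> K0 (vertex_term v) (gamma0 [:: b]).
Proof.
case=> vBdry match_b; have := f_bdry_val vBdry.
rewrite card_incoming card_outgoing /vertex_term.
move: (@mem_incoming v) (@mem_outgoing v).
case: (incoming v) => [|e []]; case: (outgoing v) => [|e' []] //= in_v out_v _.
- have [_ /(_ (out_v _ (mem_head _ _)))[-> e'b]] := match_b e'.
  exact/K0_of_step/K0_iso.
- have [/(_ (in_v _ (mem_head _ _)))[-> eb] _] := match_b e.
  exact/K0_of_step/K0_iso.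
Qed.

Lemma K0_vertex_terms_null : K0 (flatten (map vertex_term (enum (fV U)))) [::].
Proof.
apply: K0_trans (K0_pos_neg (@efib R U) (enum (fE U))).
apply/K0_of_Permutation/(Permutation_trans (Permutation_flatten_map_cat _ _ _)).
rewrite !flatten_map_map.
apply: Permutation_app; apply/Permutation_map/Permutation_of_perm_eq.
- exact: perm_flatten_fibers.
- exact: perm_flatten_fibers.
Qed.

End VertexTerms.

Definition bdry_vertex (U : foam1 R) (v : fV U) : bool :=
  if vk v is VBdry then true else false.

Lemma K0_gamma0_bdry (U : foam1 R) (M : foam0 R) : bdry_seq U M -> K0 (gamma0 M) [::].
Proof.
case=> vs [uniq_vs vs_bdry M_vs].
have interior_null : K0 (flatten (map (@vertex_term U) (enum (fV U))))
    (flatten (map (@vertex_term U) [seq v <- enum (fV U) | bdry_vertex v])).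
  apply: K0_flatten_filter => v; rewrite /bdry_vertex.
  case vk_v: (vk v) => // _; [exact: K0_vertex_term_in | exact: K0_vertex_term_out].
have bdry_perm : perm_eq [seq v <- enum (fV U) | bdry_vertex v] vs.
  apply: uniq_perm => //; first exact/filter_uniq/enum_uniq.
  move=> v; rewrite mem_filter mem_enum andbT /bdry_vertex.
  case vk_v: (vk v); last by rewrite vs_bdry.
  1,2: by apply/esym/negbTE/negP => /(Forall2_mem_r M_vs)[b [vBdry _]]; rewrite vBdry in vk_v.
have bdry_terms : K0 (flatten (map (@vertex_term U) vs)) (gamma0 M).
  elim: M_vs {uniq_vs vs_bdry} => [|b v M' vs' b_v _ IH] /=; first exact: K0_refl.
  exact: K0_cat (K0_vertex_term_bdry b_v) IH.
apply: K0_trans (K0_sym bdry_terms) (K0_trans _ (K0_vertex_terms_null U)).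
apply: K0_trans _ (K0_sym interior_null).
apply/K0_of_Permutation/Permutation_flatten/Permutation_map/Permutation_of_perm_eq.
by rewrite perm_sym.
Qed.

Lemma K0_gamma0_Cob0 (M N : foam0 R) : Cob0_eq M N -> K0 (gamma0 M) (gamma0 N).
Proof.
elim=> {M N} [M N [U /bdry_seq_of_iso/K0_gamma0_bdry]|M|M N _|M N P _ MN _ NP].
- exact: K0_gamma0_of_null.
- exact: K0_refl.
- exact: K0_sym.
- exact: K0_trans MN NP.
Qed.

End FoamBoundary.

Section Constructions.
Variable R : pzRingType.

Definition bounding (M : foam0 R) : Prop := exists U : foam1 R, bdry_iso U M.

Lemma bounding_of_seq (U : foam1 R) (M : foam0 R) (v0 : fV U) :
  bdry_seq U M -> bounding M.
Proof. by move=> UM; exists U; apply: bdry_iso_of_seq v0 UM. Qed.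

Lemma bounding_perm (M M' : foam0 R) : Permutation M M' -> bounding M -> bounding M'.
Proof.
move=> MM' [U UM]; have [f _] := UM.
have [vs [uniq_vs vs_bdry M_vs]] := bdry_seq_of_iso UM.
have [vs' [/perm_eq_of_Permutation vs_vs' M'_vs']] := Permutation_Forall2 MM' M_vs.
apply: (@bounding_of_seq U _ (f 0%N)); exists vs'; split => //.
- by rewrite -(perm_uniq vs_vs').
- by move=> v /vs_bdry; rewrite (perm_mem vs_vs').
Qed.

Definition sum_map (A B C D : Type) (f : A -> C) (g : B -> D) (x : A + B) : C + D :=
  match x with inl a => inl (f a) | inr b => inr (g b) end.

Lemma card_sum_pred (A B : finType) (p : pred (A + B)) :
  #|[pred x | p x]| = (#|[pred a | p (inl a)]| + #|[pred b | p (inr b)]|)%N.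
Proof.
by rewrite !card_pred_filter !enumT [in LHS]unlock /= /sum_enum filter_cat size_cat
  !filter_map !size_map.
Qed.

Lemma card_sum_map_inl (A B : finType) (T1 T2 : eqType) (f : A -> T1) (g : B -> T2) v :
  #|[pred x | sum_map f g x == inl v]| = #|[pred a | f a == v]|.
Proof.
by rewrite card_sum_pred (@eq_card0 _ [pred b | sum_map f g (inr b) == inl v]) ?addn0.
Qed.

Lemma card_sum_map_inr (A B : finType) (T1 T2 : eqType) (f : A -> T1) (g : B -> T2) v :
  #|[pred x | sum_map f g x == inr v]| = #|[pred b | g b == v]|.
Proof.
by rewrite card_sum_pred (@eq_card0 _ [pred a | sum_map f g (inl a) == inr v]).
Qed.

Section DisjointUnion.
Variables U1 U2 : foam1 R.

Local Notation src := (sum_map (@esrc R U1) (@esrc R U2)).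
Local Notation tgt := (sum_map (@etgt R U1) (@etgt R U2)).

Definition union_vk (v : fV U1 + fV U2) : vkind :=
  match v with inl v => vk v | inr v => vk v end.
Definition union_fib (e : fE U1 + fE U2) : FGP R :=
  match e with inl e => efib e | inr e => efib e end.

Lemma union_in_val v : union_vk v = VIn ->
  #|[pred e | tgt e == v]| = 2%N /\ #|[pred e | src e == v]| = 1%N.
Proof. by case: v => v /= /f_in_val; rewrite ?card_sum_map_inl ?card_sum_map_inr. Qed.

Lemma union_out_val v : union_vk v = VOut ->
  #|[pred e | tgt e == v]| = 1%N /\ #|[pred e | src e == v]| = 2%N.
Proof. by case: v => v /= /f_out_val; rewrite ?card_sum_map_inl ?card_sum_map_inr. Qed.

Lemma union_bdry_val v : union_vk v = VBdry ->
  (#|[pred e | tgt e == v]| + #|[pred e | src e == v]|)%N = 1%N.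
Proof. by case: v => v /= /f_bdry_val; rewrite ?card_sum_map_inl ?card_sum_map_inr. Qed.

Lemma union_in_iso v : union_vk v = VIn -> forall e1 e2 e, e1 != e2 ->
  tgt e1 = v -> tgt e2 = v -> src e = v ->
  iso_sum (union_fib e) (union_fib e1) (union_fib e2).
Proof.
by case: v => v /= vIn [e1|e1] [e2|e2] [e|e] //= e12 [t1] [t2] [s];
  apply: (f_in_iso vIn e12).
Qed.

Lemma union_out_iso v : union_vk v = VOut -> forall e1 e2 e, e1 != e2 ->
  src e1 = v -> src e2 = v -> tgt e = v ->
  iso_sum (union_fib e) (union_fib e1) (union_fib e2).
Proof.
by case: v => v /= vOut [e1|e1] [e2|e2] [e|e] //= e12 [s1] [s2] [t];
  apply: (f_out_iso vOut e12).
Qed.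

Definition foam_union : foam1 R :=
  @Build_foam1 R _ _ src tgt union_vk union_fib [::]
    union_in_val union_out_val union_bdry_val union_in_iso union_out_iso.

Lemma bdry_seq_union (M1 M2 : foam0 R) :
  bdry_seq U1 M1 -> bdry_seq U2 M2 -> bdry_seq foam_union (M1 ++ M2).
Proof.
case=> vs1 [uniq1 bdry1 M1_vs1] [vs2 [uniq2 bdry2 M2_vs2]].
exists (map inl vs1 ++ map inr vs2); split.
- rewrite cat_uniq !map_inj_uniq ?uniq1 ?uniq2 //=; try by move=> ? ? [].
  by rewrite andbT; apply/hasPn => _ /mapP[? _ ->]; apply/negP => /mapP[].
- by case=> v /= vBdry; rewrite mem_cat map_f ?orbT ?bdry1 ?bdry2.
- apply: List.Forall2_app.
  + apply: Forall2_map_r M1_vs1 => b v [vBdry b_v]; split => // -[e|e] //=.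
    by have [b_in b_out] := b_v e; split=> -[]; auto.
  + apply: Forall2_map_r M2_vs2 => b v [vBdry b_v]; split => // -[e|e] //=.
    by have [b_in b_out] := b_v e; split=> -[]; auto.
Qed.

End DisjointUnion.

Lemma bounding_cat (M1 M2 : foam0 R) : bounding M1 -> bounding M2 -> bounding (M1 ++ M2).
Proof.
move=> [U1 U1M1] [U2 U2M2]; have [f _] := U1M1.
apply: (@bounding_of_seq (foam_union U1 U2) _ (inl (f 0%N))).
exact: bdry_seq_union (bdry_seq_of_iso U1M1) (bdry_seq_of_iso U2M2).
Qed.

Lemma mod_iso_refl (P : lmodType R) : mod_iso P P.
Proof. by exists idfun; exists idfun. Qed.

Definition swap_pair (A B : lmodType R) (x : A * B) : B * A := (x.2, x.1).

Lemma swap_pair_is_linear (A B : lmodType R) : linear (@swap_pair A B).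
Proof. by move=> a [x1 x2] [y1 y2]. Qed.

HB.instance Definition _ (A B : lmodType R) :=
  GRing.isLinear.Build R (A * B)%type (B * A)%type _ (@swap_pair A B)
    (@swap_pair_is_linear A B).

Lemma iso_sumC (P P1 P2 : lmodType R) : iso_sum P P1 P2 -> iso_sum P P2 P1.
Proof.
case=> f f_bij; exists (@swap_pair P1 P2 \o f : {linear _ -> _}).
by apply: bij_comp => //; exists (@swap_pair P2 P1) => -[].
Qed.

Ltac compute_card := rewrite !cardE /enum_mem; repeat (rewrite unlock /=); done.

Section Edge.
Variable P : FGP R.

Definition edge_src (e : unit) : bool := false.
Definition edge_tgt (e : unit) : bool := true.
Definition edge_vk (v : bool) : vkind := VBdry.
Definition edge_fib (e : unit) : FGP R := P.

Lemma edge_bdry_val v : edge_vk v = VBdry ->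
  (#|[pred e | edge_tgt e == v]| + #|[pred e | edge_src e == v]|)%N = 1%N.
Proof. by case: v => _; compute_card. Qed.

Definition foam_edge : foam1 R :=
  @Build_foam1 R unit bool edge_src edge_tgt edge_vk edge_fib [::]
    (fun _ (vIn : edge_vk _ = VIn) => ltac:(discriminate vIn))
    (fun _ (vOut : edge_vk _ = VOut) => ltac:(discriminate vOut))
    edge_bdry_val
    (fun _ (vIn : edge_vk _ = VIn) => ltac:(discriminate vIn))
    (fun _ (vOut : edge_vk _ = VOut) => ltac:(discriminate vOut)).

Lemma bounding_edge (P1 P2 : FGP R) : mod_iso P P1 -> mod_iso P P2 ->
  bounding [:: Point false P1; Point true P2].
Proof.
move=> PP1 PP2; apply: (@bounding_of_seq foam_edge _ false).
exists [:: false; true]; split; [by []|by case|].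
by constructor; [split=> // e|constructor; [split=> // e|constructor]]; split.
Qed.

End Edge.

Lemma bounding_pair (s : bool) (P : FGP R) : bounding [:: Point s P; Point (~~ s) P].
Proof.
have Pnp := bounding_edge (mod_iso_refl P) (mod_iso_refl P).
by case: s => //=; apply: bounding_perm Pnp; apply: perm_swap.
Qed.

Section Tripod.
Variables (out : bool) (P1 P P2 : FGP R).
Hypothesis P12 : iso_sum P P1 P2.

(* One trivalent vertex [None], an "in" vertex if [out] is false and an "out"
   vertex otherwise, with thick edge [None] and thin edges [Some false],
   [Some true]; the univalent ends are [Some e]. *)
Definition thin (e : option bool) : bool := if e is Some _ then true else false.
Definition tripod_src (e : option bool) : option (option bool) :=
  if thin e (+) out then Some e else None.
Definition tripod_tgt (e : option bool) : option (option bool) :=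
  if thin e (+) out then None else Some e.
Definition tripod_vk (v : option (option bool)) : vkind :=
  if v is Some _ then VBdry else if out then VOut else VIn.
Definition tripod_fib (e : option bool) : FGP R :=
  match e with None => P | Some false => P1 | Some true => P2 end.

Lemma tripod_in_val v : tripod_vk v = VIn ->
  #|[pred e | tripod_tgt e == v]| = 2%N /\ #|[pred e | tripod_src e == v]| = 1%N.
Proof.
rewrite /tripod_vk /tripod_tgt /tripod_src.
by case: v => [v|]; case: out => // _; split; compute_card.
Qed.

Lemma tripod_out_val v : tripod_vk v = VOut ->
  #|[pred e | tripod_tgt e == v]| = 1%N /\ #|[pred e | tripod_src e == v]| = 2%N.
Proof.
rewrite /tripod_vk /tripod_tgt /tripod_src.
by case: v => [v|]; case: out => // _; split; compute_card.
Qed.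

Lemma tripod_bdry_val v : tripod_vk v = VBdry ->
  (#|[pred e | tripod_tgt e == v]| + #|[pred e | tripod_src e == v]|)%N = 1%N.
Proof.
rewrite /tripod_vk /tripod_tgt /tripod_src.
by case: v => [[[]|]|]; case: out => // _; compute_card.
Qed.

Lemma tripod_in_iso v : tripod_vk v = VIn -> forall e1 e2 e, e1 != e2 ->
  tripod_tgt e1 = v -> tripod_tgt e2 = v -> tripod_src e = v ->
  iso_sum (tripod_fib e) (tripod_fib e1) (tripod_fib e2).
Proof.
rewrite /tripod_vk /tripod_tgt /tripod_src; case: v => [v|]; case: out => // _.
case=> [[]|] [[]|] [[]|] //= e12 t1 t2 s; try discriminate.
all: first [exact: P12 | exact: iso_sumC P12 | by rewrite eqxx in e12].
Qed.

Lemma tripod_out_iso v : tripod_vk v = VOut -> forall e1 e2 e, e1 != e2 ->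
  tripod_src e1 = v -> tripod_src e2 = v -> tripod_tgt e = v ->
  iso_sum (tripod_fib e) (tripod_fib e1) (tripod_fib e2).
Proof.
rewrite /tripod_vk /tripod_tgt /tripod_src; case: v => [v|]; case: out => // _.
case=> [[]|] [[]|] [[]|] //= e12 s1 s2 t; try discriminate.
all: first [exact: P12 | exact: iso_sumC P12 | by rewrite eqxx in e12].
Qed.

Definition foam_tripod : foam1 R :=
  @Build_foam1 R (option bool) (option (option bool)) tripod_src tripod_tgt tripod_vk
    tripod_fib [::] tripod_in_val tripod_out_val tripod_bdry_val tripod_in_iso tripod_out_iso.

Lemma bounding_tripod : bounding [:: Point (~~ out) P; Point out P1; Point out P2].
Proof.
apply: (@bounding_of_seq foam_tripod _ None).
exists [:: Some None; Some (Some false); Some (Some true)]; split; [by []| |].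
- by case=> [[[]|]|] //=; rewrite /tripod_vk; case: out.
- constructor; [split=> // e|constructor; [split=> // e|constructor; [split=> // e|]]].
  4: exact: List.Forall2_nil.
  all: case: e => [[]|] /=; rewrite /tripod_tgt /tripod_src /=; case: out => /=.
  all: by split=> // _; split=> //; apply: mod_iso_refl.
Qed.

End Tripod.

End Constructions.

Section Cob0Calculus.
Variable R : pzRingType.
Local Open Scope ring_scope.
Local Notation C0 := (@Cob0_eq R).

Lemma Cob0_refl (M : foam0 R) : C0 M M. Proof. exact: rst_refl. Qed.
Lemma Cob0_sym (M N : foam0 R) : C0 M N -> C0 N M. Proof. exact: rst_sym. Qed.
Lemma Cob0_trans (M N P : foam0 R) : C0 M N -> C0 N P -> C0 M P.
Proof. exact: rst_trans. Qed.

Lemma Cob0_of_bounding (M0 M1 : foam0 R) : bounding (M1 ++ neg_foam M0) -> C0 M0 M1.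
Proof. exact: rst_step. Qed.

(* Stated for nonempty lists: [bdry_iso] needs some vertex [f 0]. *)
Lemma bounding_cylinder (b : point R) (M : foam0 R) :
  bounding ((b :: M) ++ neg_foam (b :: M)).
Proof.
elim: M b => [|c M IH] [s P]; first exact: bounding_pair.
apply: bounding_perm (bounding_cat (bounding_pair s P) (IH c)).
exact/perm_skip/(Permutation_middle (c :: M)).
Qed.

Lemma Cob0_perm (M N : foam0 R) : Permutation M N -> C0 M N.
Proof.
case: M => [|b M] MN; first by rewrite (Permutation_nil MN); apply: Cob0_refl.
apply/Cob0_of_bounding/(bounding_perm _ (bounding_cylinder b M)).
exact: Permutation_app_tail _ MN.
Qed.

Lemma Cob0_catr (M N L : foam0 R) : C0 M N -> C0 (M ++ L) (N ++ L).
Proof.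
case: L => [|b L]; first by rewrite !cats0.
elim=> {M N} [M N [U UNM]|M|M N _|M N P _ MN _ NP]; last 3 first.
- exact: Cob0_refl.
- exact: Cob0_sym.
- exact: Cob0_trans MN NP.
have bNL := bounding_cat (ex_intro _ U UNM) (bounding_cylinder b L).
apply/Cob0_of_bounding/(bounding_perm _ bNL).
rewrite /neg_foam map_cat -/(neg_foam M) -/(neg_foam (b :: L)) -!catA.
exact: (Permutation_app_head N
  (Permutation_app_swap_app (neg_foam M) (b :: L) (neg_foam (b :: L)))).
Qed.

Lemma Cob0_catl (M N L : foam0 R) : C0 M N -> C0 (L ++ M) (L ++ N).
Proof.
move=> MN; apply: Cob0_trans (Cob0_perm (Permutation_app_comm _ _)) _.
exact: Cob0_trans (Cob0_catr L MN) (Cob0_perm (Permutation_app_comm _ _)).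
Qed.

Lemma Cob0_cons (b : point R) (M N : foam0 R) : C0 M N -> C0 (b :: M) (b :: N).
Proof. exact: (Cob0_catl [:: b]). Qed.

Lemma Cob0_cancel (s : bool) (P : FGP R) (M : foam0 R) :
  C0 M (Point s P :: Point (~~ s) P :: M).
Proof.
have pair_null : C0 [::] [:: Point s P; Point (~~ s) P].
  by apply: Cob0_of_bounding; apply: bounding_pair.
exact: Cob0_catr M pair_null.
Qed.

Lemma Cob0_iso (s : bool) (P Q : FGP R) : mod_iso P Q -> C0 [:: Point s P] [:: Point s Q].
Proof.
move=> PQ; apply: Cob0_of_bounding; case: s => /=.
- exact: bounding_perm (perm_swap _ _ _) (bounding_edge (mod_iso_refl P) PQ).
- exact: bounding_edge PQ (mod_iso_refl P).
Qed.

Lemma Cob0_split (s : bool) (P1 P P2 : FGP R) : iso_sum P P1 P2 ->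
  C0 [:: Point s P] [:: Point s P1; Point s P2].
Proof.
move=> P12; apply/Cob0_of_bounding/(bounding_perm _ (bounding_tripod s P12)).
exact: (Permutation_cons_append [:: Point s P1; Point s P2]).
Qed.

Lemma Cob0_copies_iso n (P Q : FGP R) : mod_iso P Q -> C0 (copies n P) (copies n Q).
Proof.
move=> PQ; have nseq_iso s k : C0 (nseq k (Point s P)) (nseq k (Point s Q)).
  elim: k => [|k IH] /=; first exact: Cob0_refl.
  exact: Cob0_trans (Cob0_catr _ (Cob0_iso s PQ)) (Cob0_cons _ IH).
by case: n => k; apply: nseq_iso.
Qed.

Lemma Cob0_copies_split n (P1 P P2 : FGP R) : iso_sum P P1 P2 ->
  C0 (copies n P) (copies n P1 ++ copies n P2).
Proof.
move=> P12; have nseq_split s k :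
    C0 (nseq k (Point s P)) (nseq k (Point s P1) ++ nseq k (Point s P2)).
  elim: k => [|k IH] /=; first exact: Cob0_refl.
  apply: Cob0_trans (Cob0_catr _ (Cob0_split s P12)) _.
  apply: Cob0_trans (Cob0_catl [:: Point s P1; Point s P2] IH) _.
  exact/Cob0_perm/perm_skip/Permutation_middle.
by case: n => k; apply: nseq_split.
Qed.

Lemma Cob0_copiesD1 n (P : FGP R) : C0 (copies (n + 1) P) (Point true P :: copies n P).
Proof.
case: n => [k|[|k]].
- have -> : Posz k + 1 = Posz k.+1 by lia.
  exact: Cob0_refl.
- have -> : Negz 0 + 1 = 0 by lia.
  exact: (Cob0_cancel true P [::]).
- have -> : Negz k.+1 + 1 = Negz k by lia.
  exact: (Cob0_cancel true P (copies (Negz k) P)).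
Qed.

Lemma Cob0_copiesB1 n (P : FGP R) : C0 (copies (n - 1) P) (Point false P :: copies n P).
Proof.
case: n => [[|k]|k].
- have -> : Posz 0 - 1 = Negz 0 by lia.
  exact: Cob0_refl.
- have -> : Posz k.+1 - 1 = Posz k by lia.
  exact: (Cob0_cancel false P (copies (Posz k) P)).
- have -> : Negz k - 1 = Negz k.+1 by lia.
  exact: Cob0_refl.
Qed.

Lemma Cob0_copiesD n m (P : FGP R) : C0 (copies n P ++ copies m P) (copies (n + m) P).
Proof.
have move_last b M N : C0 (M ++ b :: N) (b :: M ++ N).
  exact/Cob0_perm/Permutation_sym/Permutation_middle.
case: m => k; elim: k => [|k IH].
- by rewrite /= cats0 addr0; apply: Cob0_refl.
- have -> : n + Posz k.+1 = (n + Posz k) + 1 by lia.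
  apply: Cob0_trans (move_last _ _ _) (Cob0_trans (Cob0_cons _ IH) _).
  exact/Cob0_sym/Cob0_copiesD1.
- have -> : n + Negz 0 = n - 1 by lia.
  by apply: Cob0_trans (move_last _ _ _) _; rewrite cats0; apply/Cob0_sym/Cob0_copiesB1.
- have -> : n + Negz k.+1 = (n + Negz k) - 1 by lia.
  apply: Cob0_trans (move_last _ _ _) (Cob0_trans (Cob0_cons _ IH) _).
  exact/Cob0_sym/Cob0_copiesB1.
Qed.

Lemma Cob0_expand (s t : K0sum R) : K0_eq s t -> C0 (expand s) (expand t).
Proof.
elim=> {s t} [s t st|s|s t _|s t u _ st _ tu]; last 3 first.
- exact: Cob0_refl.
- exact: Cob0_sym.
- exact: Cob0_trans st tu.
case: st => {s t} [s t st|P s|n m P s|n P Q s PQ|n P1 P P2 s P12]; rewrite /expand /=.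
- exact/Cob0_perm/Permutation_flatten/Permutation_map.
- exact: Cob0_refl.
- by rewrite catA; apply/Cob0_catr/Cob0_copiesD.
- exact/Cob0_catr/Cob0_copies_iso.
- by rewrite catA; apply/Cob0_catr/Cob0_copies_split.
Qed.

End Cob0Calculus.

Theorem mainTheorem1 (R : pzRingType) :
  (* well defined on Cob_0(R) *)
  (forall M N : foam0 R, Cob0_eq M N -> K0_eq (gamma0 M) (gamma0 N)) /\
  (* homomorphism: disjoint union to sum, inverse to inverse *)
  (forall M N : foam0 R, K0_eq (gamma0 (M ++ N)) (gamma0 M ++ gamma0 N)) /\
  (forall M : foam0 R, K0_eq (gamma0 (neg_foam M) ++ gamma0 M) [::]) /\
  (* injective *)
  (forall M N : foam0 R, K0_eq (gamma0 M) (gamma0 N) -> Cob0_eq M N) /\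
  (* surjective *)
  (forall x : K0sum R, exists M : foam0 R, K0_eq (gamma0 M) x).
Proof.
split; first exact: K0_gamma0_Cob0.
split; first by move=> M N; rewrite gamma0_cat; apply: K0_refl.
split; first exact: K0_gamma0_neg_cat.
split; first by move=> M N /Cob0_expand; rewrite !gamma0K.
by move=> x; exists (expand x); apply: K0_gamma0_expand.
Qed.
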